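(* Let $q\in\mathbb{C}$, let $c_i(q,\pi)\in\mathbb{C}$ ($p\ge1$, $1\le i\le p$, $\pi\in\mathfrak{S}_p$) be coefficients, and for $p\ge1$ let $$\mathcal{E}_p=\sum_{k_1,\ldots,k_p}\sum_{\pi\in\mathfrak{S}_p}\sum_{i=1}^p c_i(q,\pi)\,E(k_{\pi(i)})\,a^\dagger(k_{\pi(p)})\cdots a^\dagger(k_{\pi(1)})\,a(k_1)\cdots a(k_p),$$ and $$R_p(q,X)=\alpha_p\sum_{\pi\in\mathfrak{S}_p}\sum_{i=1}^p c_i(q,\pi)X^{i-1}\pi\in\mathbb{C}[X][\mathfrak{S}_p].$$ Then for every $n$-particle state $K$ (an ordered $n$-tuple of distinct momenta) and every $1\le p\le n$, $$\mathcal{E}_pK=\xi\Bigl(X^{n-p}\sum_{J\subset K,\ |J|=p}q^{I_K\left((K-J)\sqcup J\right)}\,(K-J)\sqcup R_p(q,X)J\Bigr).$$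
   Context: Operators $a(k)$, indexed by momenta $k$, with adjoints $a^\dagger(k)$, satisfy $a(k)a^\dagger(\ell)-q\,a^\dagger(\ell)a(k)=\delta_{k,\ell}$ and $a(k)|0\rangle=0$. An ordered set $K=[k_1,\dots,k_n]$ of pairwise distinct momenta is identified with the state $a^\dagger(k_n)\cdots a^\dagger(k_1)|0\rangle$, and formal linear combinations of such ordered sets with the corresponding linear combinations of states. $E(k)$ is the single-particle energy of momentum $k$. For $\pi\in\mathfrak{S}_n$, $I(\pi)$ is the number of inversions (pairs $i<j$ with $\pi(i)>\pi(j)$); $\alpha_p=\sum_{\rho\in\mathfrak{S}_p}q^{I(\rho)}\rho\in\mathbb{C}[\mathfrak{S}_p]$. The group $\mathfrak{S}_n$ acts on ordered $n$-element sets by permuting positions, extended linearly to the group algebra and to polynomials in $X$ (with $X$ commuting). For an ordered set $A$ and $\sigma\in\mathfrak{S}_n$, $I_A(\sigma A):=I(\sigma)$. A subset $J\subset K$ carries the order induced from $K$; $K-J$ is the complement with induced order; for disjoint ordered sets $A_1,A_2$, $A_1\sqcup A_2$ is the ordered set listing the elements of $A_1$ (in order) followed by those of $A_2$ (in order), extended bilinearly (and with powers of $X$ carried along) to linear combinations. The evaluation map $\xi$ is the linear map on polynomials in $X$ with coefficients formal linear combinations of ordered $n$-sets defined by $\xi(B\,X^{i-1})=E(B(i))\,B$, where $B(i)$ is the $i$-th element of the ordered set $B$. *)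

(* Complex numbers are modelled as [complex R] (= R[i]) for
   [R : realType] (the real numbers); all definitions below are generic over a
   commutative ring [C]. *)
From HB Require Import structures.
From mathcomp Require Import all_boot all_order all_algebra all_fingroup.
From mathcomp Require Export reals complex.
Import GRing.Theory.
Local Open Scope ring_scope.

Section Fock.
Variables (M : eqType) (C : comNzRingType) (q : C).

(* A vector of the (algebraic) q-Fock space: its coefficient on each word
   [k_1; ...; k_n], the word standing for a^dag(k_n) ... a^dag(k_1)|0>. *)
Definition state := seq M -> C.

Definition basis (K : seq M) : state := fun w => (w == K)%:R.

Definition adag (l : M) (f : state) : state := fun w =>
  match rev w with
  | y :: r => if y == l then f (rev r) else 0
  | [::] => 0
  end.

(* annihilation operator a(k), the unique action forced by
   a(k) a^dag(l) - q a^dag(l) a(k) = delta_{k,l} and a(k)|0> = 0: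
   a(k)[k_1..k_n] = sum_j q^(n-j) delta_{k,k_j} [k_1..^k_j..k_n]. *)
Definition annih (k : M) (f : state) : state := fun w =>
  \sum_(i < (size w).+1) q ^+ (size w - i) * f (take i w ++ k :: drop i w).

(* a^dag(x_p) ... a^dag(x_1) f  for s = [x_1; ..; x_p] *)
Definition adags (s : seq M) (f : state) : state := foldl (fun g x => adag x g) f s.
(* a(x_1) ... a(x_p) f  for s = [x_1; ..; x_p] *)
Definition annihs (s : seq M) (f : state) : state := foldr annih f s.

(* The operator E_p, with the momentum sums k_1..k_p running over a finite
   list S of (distinct) momenta. *)
Definition Eop (E : M -> C) (c : forall p : nat, 'I_p -> 'S_p -> C)
    (p : nat) (S : seq M) (f : state) : state := fun w =>
  \sum_(t : {ffun 'I_p -> 'I_(size S)})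
    let k := fun j : 'I_p => tnth (in_tuple S) (t j) in
    \sum_(pi : 'S_p) \sum_(i < p)
      c p i pi * E (k (pi i)) *
      adags [seq k (pi j) | j <- enum 'I_p] (annihs [seq k j | j <- enum 'I_p] f) w.

(* Polynomials in X whose coefficients are formal linear combinations of
   ordered sets: coefficient (a polynomial) of each word. *)
Definition pstate := seq M -> {poly C}.

Definition ninv (n : nat) (s : 'S_n) : nat :=
  #|[set ij : 'I_n * 'I_n | (ij.1 < ij.2)%N && (s ij.2 < s ij.1)%N]|.

Definition permute (n : nat) (s : 'S_n) (A : seq M) : seq M :=
  if A is x :: _ then [seq nth x A (s i) | i <- enum 'I_n] else [::].

(* I_A(sigma A) := I(sigma) *)
Definition Irel (A B : seq M) : nat :=
  match [pick s : 'S_(size A) | permute _ s A == B] with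
  | Some s => ninv _ s
  | None => 0
  end.

Definition galg (p : nat) := 'S_p -> {poly C}.

(* product in the group algebra; (rho pi)(x) = rho (pi x), i.e. the mathcomp
   product (pi * rho)%g *)
Definition gmul (p : nat) (f g : galg p) : galg p := fun s =>
  \sum_(rho : 'S_p) \sum_(pi : 'S_p)
    if (pi * rho)%g == s then f rho * g pi else 0.

Definition alpha (p : nat) : galg p := fun rho => (q ^+ ninv _ rho)%:P.

Definition Rp (c : forall p : nat, 'I_p -> 'S_p -> C) (p : nat) : galg p :=
  gmul p (alpha p) (fun pi => \sum_(i < p) (c p i pi)%:P * 'X^i).

Definition gact (p : nat) (r : galg p) (J : seq M) : pstate := fun w =>
  \sum_(s : 'S_p) if permute _ s J == w then r s else 0.

Definition catl (A : seq M) (F : pstate) : pstate := fun w =>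
  if take (size A) w == A then F (drop (size A) w) else 0.

(* evaluation map xi(B X^(i-1)) = E(B(i)) B (terms with i > |B| never occur
   below and are sent to 0) *)
Definition xi (E : M -> C) (F : pstate) : state := fun B =>
  \sum_(i < size B) (F B)`_i * E (tnth (in_tuple B) i).

(* J ranges over the p-element subsets of K, with induced orders *)
Definition subJ (K : seq M) (A : {set 'I_(size K)}) : seq M :=
  mask [seq i \in A | i <- enum 'I_(size K)] K.
Definition compJ (K : seq M) (A : {set 'I_(size K)}) : seq M :=
  mask [seq i \notin A | i <- enum 'I_(size K)] K.

Definition rhs_poly (c : forall p : nat, 'I_p -> 'S_p -> C) (K : seq M) (p : nat)
    : pstate := fun w =>
  'X^(size K - p) *
  \sum_(A : {set 'I_(size K)} | #|A| == p)
    (q ^+ Irel K (compJ _ A ++ subJ _ A))%:P *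
    catl (compJ _ A) (gact p (Rp c p) (subJ _ A)) w.

End Fock.

Arguments basis {M C}. Arguments adag {M C}. Arguments annih {M C}.
Arguments adags {M C}. Arguments annihs {M C}. Arguments Eop {M C}.
Arguments permute {M}. Arguments Irel {M}. Arguments gmul {C}. Arguments alpha {C}.
Arguments Rp {C}. Arguments gact {M C}. Arguments catl {M C}. Arguments xi {M C}.
Arguments subJ {M}. Arguments compJ {M}. Arguments rhs_poly {M C}.

From Pilot Require Import Defs.
From HB Require Import structures.
From mathcomp Require Import all_boot all_order all_algebra all_fingroup.
From mathcomp Require Import reals complex.
From mathcomp Require Import zify.
From Stdlib Require Import FunctionalExtensionality.
Import GRing.Theory.

(* On a basis state [K], the annihilators a(k_1) ... a(k_p) vanish unless the
   k_j are distinct letters of [K]; they then leave [K - k] with weight [q^m],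
   where [m] counts the inversions of [(K - k) ⊔ k] relative to [K], and the
   creators append [k] permuted by [π].  Writing [k = ρ J] with [J ⊂ K] in its
   induced order, [m] splits as [I_K((K - J) ⊔ J) + I(ρ)], so collecting the
   terms over [ρ] and [π] reproduces [R_p(q, X) = α_p Σ_π Σ_i c_i(q, π) X^(i-1) π]
   acting on [J].  Finally [ξ] reads [X^(n-p+i-1)] in front of the word
   [(K - J) ⊔ π ρ J] as the energy of its [(n-p+i)]-th letter, which is
   [k_(π(i))]. *)

Fixpoint npairs (T : Type) (R : rel T) (s : seq T) : nat :=
  if s is x :: s' then count (R x) s' + npairs T R s' else 0.
Arguments npairs {T}.

Lemma npairs_map (T1 T2 : Type) (R : rel T2) (f : T1 -> T2) (s : seq T1) :
  npairs R (map f s) = npairs (relpre f R) s.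
Proof. by elim: s => //= x s ->; rewrite count_map. Qed.

Section Inversions.
Variable T : eqType.
Implicit Types (R : rel T) (s K B : seq T) (x y : T).

Lemma npairs_cat R s1 s2 :
  npairs R (s1 ++ s2) = npairs R s1 + npairs R s2 + \sum_(y <- s1) count (R y) s2.
Proof.
elim: s1 => [|x s1 IH] /=; first by rewrite big_nil addn0.
by rewrite IH count_cat big_cons; lia.
Qed.

Lemma eq_in_npairs R1 R2 s : {in s &, R1 =2 R2} -> npairs R1 s = npairs R2 s.
Proof.
elim: s => [|x s IH] //= eqR.
rewrite IH => [|a b a_s b_s]; last by apply: eqR; rewrite inE ?a_s ?b_s orbT.
congr (_ + _); apply: eq_in_count => y ys.
by apply: eqR; rewrite inE ?ys ?eqxx ?orbT.
Qed.

Lemma npairs_uniqE R s : uniq s ->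
  npairs R s = \sum_(x <- s) \sum_(y <- s) ((index x s < index y s) && R x y).
Proof.
elim: s => [|x s IH] /=; first by rewrite big_nil.
move=> /andP[xNs us]; rewrite IH // !big_cons /= eqxx add0n.
have neq_x z : z \in s -> (x == z) = false.
  by move=> zs; apply/negbTE; apply: contraNneq xNs => ->.
congr (_ + _).
  rewrite -sum1_count big_mkcond /=.
  by apply: eq_big_seq => y ys; rewrite neq_x.
apply: eq_big_seq => y ys; rewrite big_cons neq_x // eqxx ltn0 add0n.
by apply: eq_big_seq => z zs; rewrite neq_x.
Qed.

Definition before K x y := index x K < index y K.

Definition inversions K B := npairs (fun x y => before K y x) B.

Lemma before_trans K : transitive (before K).
Proof. by move=> y x z; apply: ltn_trans. Qed.

Lemma inversions_sorted K B : sorted (before K) B -> inversions K B = 0.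
Proof.
elim: B => [|x B IH] //= sxB.
rewrite /inversions /= -/(inversions K B) IH ?(path_sorted sxB) // addn0.
have /allP x_min := order_path_min (@before_trans K) sxB.
apply/eqP; rewrite -leqn0 leqNgt -has_count; apply/hasP => -[y yB].
by move: (x_min y yB); rewrite /before => /ltn_trans h /h; rewrite ltnn.
Qed.

Lemma sorted_before K : uniq K -> sorted (before K) K.
Proof.
move=> uK; rewrite sorted_pairwise; last exact: before_trans.
case: K uK => [//|x0 K'] uK.
by apply/(pairwiseP x0) => i j ilt jlt ij; rewrite /before !index_uniq.
Qed.

Lemma sorted_before_filter K (P : pred T) : uniq K -> sorted (before K) (filter P K).
Proof. by move=> uK; apply: sorted_filter; [exact: before_trans|exact: sorted_before]. Qed.

Lemma before_nth K B y i j : sorted (before K) B -> i < size B -> j < size B ->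
  before K (nth y B i) (nth y B j) = (i < j).
Proof.
move=> sB ilt jlt.
have /(pairwiseP y) pB : pairwise (before K) B.
  by rewrite -sorted_pairwise //; exact: before_trans.
case: (ltngtP i j) => [ij|ji|->]; first exact: pB.
  by apply/negbTE; rewrite /before -leqNgt ltnW //; apply: pB.
by rewrite /before ltnn.
Qed.

Lemma count_before K B x : sorted (before K) B -> x \in B ->
  count (before K x) B = size B - (index x B).+1.
Proof.
move=> sB xB.
have count_gt i n : count (fun j => i < j) (iota 0 n) = n - i.+1.
  elim: n => [//|n IHn]; rewrite -[n.+1]addn1 iotaD count_cat IHn /= add0n addn0.
  by case: (ltnP i n); lia.
rewrite -{1}(mkseq_nth x B) /mkseq count_map -count_gt.
apply: eq_in_count => j; rewrite mem_iota add0n /= => jlt.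
by rewrite -{1}(nth_index x xB) before_nth // index_mem.
Qed.

Lemma before_filter K (P : pred T) x y : uniq K ->
  x \in filter P K -> y \in filter P K -> before (filter P K) x y = before K x y.
Proof.
move=> uK xP yP.
have sP := @sorted_before_filter K P uK.
rewrite -(nth_index x xP) -(nth_index x yP) [RHS](before_nth _ _ x _ _ sP) ?index_mem //.
by rewrite /before !index_uniq ?index_mem ?filter_uniq.
Qed.

Lemma inversions_cat K B1 B2 : inversions K (B1 ++ B2) =
  inversions K B1 + inversions K B2 + \sum_(y <- B1) count (before K ^~ y) B2.
Proof. exact: npairs_cat. Qed.

Definition exclude s K := [seq x <- K | x \notin s].

(* Moving [x] from the sorted prefix to the front of [s] puts it after exactly
   the letters that follow it in the prefix. *)
Lemma inversions_move K s x : uniq K -> x \in exclude s K ->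
  inversions K (rem x (exclude s K) ++ x :: s) =
  inversions K (exclude s K ++ s) + (size (exclude s K) - (index x (exclude s K)).+1).
Proof.
set L := exclude s K => uK xL.
have sL : sorted (before K) L by apply: sorted_before_filter.
have sLx : sorted (before K) (rem x L).
  by rewrite rem_filter ?filter_uniq //; apply: sorted_filter sL; exact: before_trans.
rewrite !inversions_cat (inversions_sorted _ _ sLx) (inversions_sorted _ _ sL) !add0n.
rewrite (perm_big _ (perm_to_rem xL)) big_cons.
rewrite /inversions /= -/(inversions K s).
have -> : \sum_(y <- rem x L) count (before K ^~ y) (x :: s) =
   count (before K x) (rem x L) + \sum_(y <- rem x L) count (before K ^~ y) s.
  rewrite /= big_split /=; congr (_ + _).
  by rewrite -sum1_count [RHS]big_mkcond; apply: eq_bigr => y _; case: before.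
have -> : count (before K x) (rem x L) = count (before K x) L.
  by rewrite (seq.permP (perm_to_rem xL)) /= /before ltnn.
by rewrite count_before //; lia.
Qed.

Lemma inversions_split K s : uniq K -> uniq s -> {subset s <= K} ->
  inversions K (exclude s K ++ s) =
  inversions K (exclude s K ++ filter (mem s) K) + inversions (filter (mem s) K) s.
Proof.
set J := filter (mem s) K => uK us sK.
have pJ : perm_eq s J.
  apply: uniq_perm; rewrite ?filter_uniq // => y.
  by rewrite /J mem_filter /=; case: (boolP (y \in s)) => // /sK ->.
rewrite !inversions_cat (inversions_sorted _ _ (sorted_before_filter _ _ uK)).
rewrite (inversions_sorted _ _ (sorted_before_filter _ _ uK)) !add0n.
rewrite (eq_bigr (fun y => count (before K ^~ y) J)) => [|y _]; last exact: seq.permP.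
rewrite addnC; congr (_ + _).
apply: eq_in_npairs => a b; rewrite !(perm_mem pJ) => aJ bJ.
by rewrite before_filter.
Qed.

End Inversions.
Arguments before {T}. Arguments inversions {T}. Arguments exclude {T}.

Section Permute.
Variables (T : eqType) (n : nat).
Implicit Types (s r : 'S_n) (J B : seq T).

Lemma permuteE s J y : size J = n ->
  permute n s J = [seq nth y J (s i) | i <- enum 'I_n].
Proof.
case: J => [|x J'] /= sizeJ; first by subst n; case: (enum 'I_0) (size_enum_ord 0).
by apply: eq_map => i; apply: set_nth_default; rewrite /= sizeJ.
Qed.

Lemma size_permute s J : size J = n -> size (permute n s J) = n.
Proof.
case: J => [|x J'] sizeJ //.
by rewrite (permuteE s _ x sizeJ) size_map size_enum_ord.
Qed.

Lemma nth_permute s J y (i : 'I_n) : size J = n ->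
  nth y (permute n s J) i = nth y J (s i).
Proof.
by move=> sizeJ; rewrite (permuteE s _ y sizeJ) (nth_map i) ?size_enum_ord ?nth_ord_enum.
Qed.

Lemma permute_nthP s J B y : size J = n -> size B = n ->
  (forall i : 'I_n, nth y B i = nth y J (s i)) -> permute n s J = B.
Proof.
move=> sizeJ sizeB eqB; apply: (@eq_from_nth _ y); first by rewrite size_permute.
move=> i; rewrite size_permute // => ilt.
by rewrite (_ : i = Ordinal ilt) // nth_permute // eqB.
Qed.

Lemma permuteM s r J : size J = n ->
  permute n s (permute n r J) = permute n (s * r)%g J.
Proof.
case: J => [|y J'] sizeJ; first by [].
apply: (permute_nthP _ _ _ y) => [||i]; rewrite ?size_permute ?size_permute //.
by rewrite !nth_permute ?size_permute // permM.
Qed.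

Lemma perm_eq_permute s J : size J = n -> perm_eq J (permute n s J).
Proof.
case: J => [|y J'] sizeJ //; rewrite (permuteE s _ y sizeJ).
have -> : [seq nth y (y :: J') (s i) | i <- enum 'I_n] =
          map (nth y (y :: J')) (map val (map s (enum 'I_n))) by rewrite -!map_comp.
have s_enum : perm_eq (map s (enum 'I_n)) (enum 'I_n).
  apply: uniq_perm; rewrite ?(map_inj_uniq (@perm_inj _ s)) ?enum_uniq // => i.
  by rewrite mem_enum; apply/mapP; exists ((s^-1)%g i); rewrite ?mem_enum ?permKV.
rewrite perm_sym (perm_trans (perm_map _ (perm_map _ s_enum))) //.
by rewrite val_enum_ord -sizeJ -/(mkseq _ _) mkseq_nth.
Qed.

Lemma permute_inj J : uniq J -> size J = n -> injective (permute n ^~ J).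
Proof.
case: J => [|y J'] uJ sizeJ s s' eqJ; first by subst n; apply/permP => -[].
apply/permP => i; apply: val_inj.
have /eqP := congr1 (fun B => nth y B i) eqJ.
by rewrite !nth_permute // nth_uniq ?sizeJ // => /eqP.
Qed.

Lemma perm_eq_permuteP J B : uniq J -> size J = n -> perm_eq J B ->
  exists s : 'S_n, permute n s J = B.
Proof.
case: J => [|y J'] uJ sizeJ JB.
  by exists 1%g; move: JB; rewrite perm_sym => /perm_nilP ->.
set J := y :: J' in uJ sizeJ JB *.
have sizeB : size B = n by rewrite -(perm_size JB).
have uB : uniq B by rewrite -(perm_uniq JB).
have BJ (i : 'I_n) : nth y B i \in J by rewrite (perm_mem JB) mem_nth ?sizeB.
have index_lt (i : 'I_n) : index (nth y B i) J < n by rewrite -[X in _ < X]sizeJ index_mem.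
pose f (i : 'I_n) := Ordinal (index_lt i).
have f_inj : injective f.
  move=> i j /(congr1 (nth y J \o val)) /=; rewrite !nth_index // => /eqP.
  by rewrite nth_uniq ?sizeB // => /eqP /val_inj.
by exists (perm f_inj); apply: permute_nthP => // i; rewrite permE nth_index.
Qed.

Lemma ninv_inversions s J : uniq J -> size J = n ->
  ninv n s = inversions J (permute n s J).
Proof.
case: J => [|y J'] uJ sizeJ.
  by subst n; apply/eqP; rewrite cards_eq0; apply/eqP/setP => -[[i ?] ?].
set J := y :: J' in uJ sizeJ *.
rewrite (permuteE s _ y sizeJ) /inversions npairs_map.
rewrite (@eq_in_npairs _ _ (fun i j : 'I_n => s j < s i)); last first.
  by move=> i j _ _ /=; rewrite /before !index_uniq ?sizeJ.
rewrite npairs_uniqE ?enum_uniq // /ninv -sum1dep_card big_mkcond /=.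
rewrite -(pair_bigA _ (fun i j : 'I_n => if (i < j) && (s j < s i) then 1 else 0)) /=.
rewrite [RHS]big_enum /=; apply: eq_bigr => i _.
by rewrite big_enum /=; apply: eq_bigr => j _; rewrite !index_enum_ord; case: (_ && _).
Qed.

End Permute.
Arguments permuteE {T n} s {J}. Arguments size_permute {T n} s {J}.
Arguments nth_permute {T n} s {J}. Arguments permuteM {T n} s r {J}.
Arguments perm_eq_permute {T n} s {J}. Arguments permute_inj {T n J}.
Arguments perm_eq_permuteP {T n J B}. Arguments ninv_inversions {T n} s {J}.

Lemma Irel_inversions (T : eqType) (K B : seq T) :
  uniq K -> perm_eq K B -> Irel K B = inversions K B.
Proof.
move=> uK KB; rewrite /Irel; case: pickP => [s /eqP <- | noS].
  exact: ninv_inversions.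
have [s sKB] := perm_eq_permuteP uK erefl KB.
by move: (noS s); rewrite sKB eqxx.
Qed.

Lemma insert_eq (T : eqType) (L w : seq T) x i : uniq L -> i <= size w ->
  (take i w ++ x :: drop i w == L) = [&& x \in L, w == rem x L & i == index x L].
Proof.
move=> uL ile; apply/eqP/and3P => [eqL | [xL /eqP -> /eqP ->]].
  subst L.
  have size_take_i : size (take i w) = i by rewrite size_take_min; lia.
  have xNtake : x \notin take i w.
    by move: uL; rewrite cat_uniq => /and3P[_ /hasPn /(_ x) -> //]; rewrite inE eqxx.
  have index_x : index x (take i w ++ x :: drop i w) = i.
    by rewrite index_cat (negbTE xNtake) /= eqxx size_take_i addn0.
  split; rewrite ?mem_cat ?inE ?eqxx ?orbT ?index_x //.
  rewrite remE index_x take_size_cat // drop_cat size_take_i.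
  by rewrite ltnNge leqnSn /= subSnn /= drop0 cat_take_drop.
have index_lt : index x L < size L by rewrite index_mem.
rewrite remE take_size_cat ?drop_size_cat ?size_take ?index_lt //.
by rewrite -{2}(nth_index x xL) -drop_nth // cat_take_drop.
Qed.
Arguments insert_eq {T L w} x {i}.

Definition uniq_within (T : eqType) (K s : seq T) := uniq s && all (mem K) s.
Arguments uniq_within {T}.

Lemma uniq_within_cons (T : eqType) (K s : seq T) x :
  uniq_within K (x :: s) = (x \in exclude s K) && uniq_within K s.
Proof.
by rewrite /uniq_within /= mem_filter; case: (x \in s); case: (x \in K); case: (uniq s).
Qed.

Lemma rem_exclude (T : eqType) (K s : seq T) x : uniq K ->
  rem x (exclude s K) = exclude (x :: s) K.
Proof.
move=> uK; rewrite rem_filter ?filter_uniq // -filter_predI.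
by apply: eq_filter => y /=; rewrite inE negb_or andbC.
Qed.

Section BasisAction.
Variables (M : eqType) (C : comNzRingType) (q : C).
Implicit Types (x : M) (B K L s : seq M) (a : C).
Local Open Scope ring_scope.

Lemma adag_basis x a B :
  adag x (fun w => a * basis B w) = (fun w => a * basis (rcons B x) w).
Proof.
apply: functional_extensionality => w; rewrite /adag /basis.
case/lastP: w => [|w y]; first by case: B => [|? ?]; rewrite /= mulr0.
by rewrite rev_rcons revK eqseq_rcons; case: (y == x); rewrite ?andbT ?andbF ?mulr0.
Qed.

Lemma adags_basis s a B :
  adags s (fun w => a * basis B w) = (fun w => a * basis (B ++ s) w).
Proof.
elim: s B => [|x s IH] B; first by rewrite cats0.
by rewrite /adags /= -/(adags s _) adag_basis IH cat_rcons.
Qed.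

Lemma annih_basis x a L : uniq L ->
  annih q x (fun w => a * basis L w) =
  (fun w => (if x \in L then a * q ^+ (size L - (index x L).+1) else 0) *
            basis (rem x L) w).
Proof.
move=> uL; apply: functional_extensionality => w; rewrite /annih /basis.
under eq_bigr => i _ do rewrite (insert_eq x uL (ltn_ord i)).
have [xL|xNL] := boolP (x \in L); last by rewrite big1 ?mul0r // => i _; rewrite !mulr0.
have [w_rem|] := eqVneq w (rem x L); last by rewrite big1 ?mulr0 // => i _; rewrite !mulr0.
have size_w : size w = (size L).-1 by rewrite w_rem size_rem.
have index_lt : (index x L < (size w).+1)%N.
  by move: (xL); rewrite -index_mem size_w; lia.
rewrite (bigD1 (Ordinal index_lt)) //= eqxx big1 => [|j neq_j]; last first.
  rewrite (_ : (j == index x L :> nat) = false) ?mulr0 //.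
  by apply: contraNF neq_j => /eqP eq_j; apply/eqP/val_inj.
rewrite addr0 !mulr1 mulrC size_w; congr (_ * q ^+ _).
by move: index_lt; rewrite size_w; lia.
Qed.

Lemma annihs_basis K s : uniq K ->
  annihs q s (basis K) =
  (fun w => (if uniq_within K s then q ^+ inversions K (exclude s K ++ s) else 0) *
            basis (exclude s K) w).
Proof.
move=> uK; elim: s => [|x s IH] /=.
  apply: functional_extensionality => w.
  have -> : exclude [::] K = K by apply/all_filterP/allP.
  by rewrite cats0 inversions_sorted ?sorted_before // expr0 mul1r.
rewrite -/(annihs q s (basis K)) IH annih_basis ?filter_uniq //.
apply: functional_extensionality => w; rewrite rem_exclude // uniq_within_cons.
have [xL|] //= := boolP (x \in exclude s K); case: (uniq_within K s); rewrite ?mul0r //.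
by rewrite -exprD -inversions_move -?rem_exclude.
Qed.

End BasisAction.

Section Subsets.
Variables (M : eqType) (K : seq M).
Hypothesis uK : uniq K.
Local Notation n := (size K).
Implicit Types (A : {set 'I_n}).

Lemma mask_enumE (P : pred 'I_n) :
  mask [seq P i | i <- enum 'I_n] K = [seq tnth (in_tuple K) i | i <- enum 'I_n & P i].
Proof. by rewrite filter_mask map_mask map_tnth_enum. Qed.

Lemma mem_subJ A (i : 'I_n) : (tnth (in_tuple K) i \in subJ K A) = (i \in A).
Proof.
by rewrite /subJ mask_enumE (mem_map (tuple_uniqP (in_tuple K) uK)) mem_filter mem_enum andbT.
Qed.

Lemma size_subJ A : size (subJ K A) = #|A|.
Proof.
rewrite /subJ mask_enumE size_map size_filter.
by rewrite -sum1_count big_enum_cond /= sum1_card.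
Qed.

Lemma uniq_subJ A : uniq (subJ K A).
Proof. exact: mask_uniq. Qed.

Lemma subJ_sub A : {subset subJ K A <= K}.
Proof. by move=> x; apply: mem_mask. Qed.

Lemma subJ_filter A : subJ K A = filter (mem (subJ K A)) K.
Proof. by apply/(subseq_uniqP uK); exact: mask_subseq. Qed.

Lemma compJ_exclude A : compJ K A = exclude (subJ K A) K.
Proof.
rewrite /compJ (mask_enumE (fun i => i \notin A)) /exclude.
rewrite -[X in _ = filter _ X](map_tnth_enum (in_tuple K)) filter_map.
by congr map; apply: eq_filter => i /=; rewrite mem_subJ.
Qed.

Lemma perm_compJ_subJ A : perm_eq K (compJ K A ++ subJ K A).
Proof.
by rewrite compJ_exclude {2}subJ_filter perm_sym perm_catC perm_filterC.
Qed.

Lemma size_compJ A : size (compJ K A) = n - #|A|.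
Proof. by rewrite -size_subJ (perm_size (perm_compJ_subJ A)) size_cat addnK. Qed.

Variables (p : nat) (A : {set 'I_n}) (rho : 'S_p).
Hypothesis cardA : #|A| = p.
Let J := subJ K A.
Let sizeJ : size J = p. Proof. by rewrite size_subJ. Qed.

Lemma perm_eq_subJ_permute : perm_eq J (permute p rho J).
Proof. exact: perm_eq_permute. Qed.

Lemma uniq_within_permute_subJ : uniq_within K (permute p rho J).
Proof.
have JrhoJ := perm_eq_subJ_permute.
rewrite /uniq_within -(perm_uniq JrhoJ) uniq_subJ /=.
by apply/allP => x; rewrite -(perm_mem JrhoJ); apply: subJ_sub.
Qed.

Lemma exclude_permute_subJ : exclude (permute p rho J) K = compJ K A.
Proof.
rewrite compJ_exclude; apply: eq_filter => x /=.
by rewrite (perm_mem perm_eq_subJ_permute).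
Qed.

Lemma inversions_permute_subJ :
  inversions K (compJ K A ++ permute p rho J) = Irel K (compJ K A ++ J) + ninv p rho.
Proof.
have JrhoJ := perm_eq_subJ_permute.
have /andP[u_rhoJ /allP rhoJ_K] := uniq_within_permute_subJ.
rewrite -exclude_permute_subJ inversions_split //.
have -> : filter (mem (permute p rho J)) K = J.
  by rewrite [RHS]subJ_filter; apply: eq_filter => x /=; rewrite (perm_mem JrhoJ).
rewrite exclude_permute_subJ Irel_inversions ?perm_compJ_subJ //.
by rewrite (ninv_inversions rho (uniq_subJ A) sizeJ).
Qed.

End Subsets.
Arguments mem_subJ {M K}. Arguments uniq_subJ {M K}. Arguments subJ_sub {M K}.
Arguments subJ_filter {M K}. Arguments compJ_exclude {M K}. Arguments perm_compJ_subJ {M K}.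
Arguments size_compJ {M K}. Arguments size_subJ {M}.
Arguments perm_eq_subJ_permute {M K p A}. Arguments uniq_within_permute_subJ {M K} uK {p A}.
Arguments exclude_permute_subJ {M K} uK {p A}. Arguments inversions_permute_subJ {M K} uK {p A}.

Local Open Scope ring_scope.

Section GroupAlgebra.
Variables (M : eqType) (C : comNzRingType) (p : nat).
Implicit Types (f g r : galg C p) (L J w : seq M).

Lemma catl_gact L J r w :
  catl L (Defs.gact p r J) w = \sum_(s : 'S_p) if w == L ++ permute p s J then r s else 0.
Proof.
have cat_eq D : (w == L ++ D) = (take (size L) w == L) && (drop (size L) w == D).
  apply/eqP/andP => [->|[/eqP eqL /eqP eqD]]; first by rewrite take_size_cat ?drop_size_cat.
  by rewrite -(cat_take_drop (size L) w) eqL eqD.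
rewrite /catl /Defs.gact; have [take_w | take_w] := eqVneq (take (size L) w) L.
  by apply: eq_bigr => s _; rewrite cat_eq take_w eqxx eq_sym.
by rewrite big1 // => s _; rewrite cat_eq (negbTE take_w).
Qed.

Lemma sum_gmul (P : pred 'S_p) f g :
  \sum_(s : 'S_p) (if P s then gmul p f g s else 0) =
  \sum_(rho : 'S_p) \sum_(pi : 'S_p) if P (pi * rho)%g then f rho * g pi else 0.
Proof.
rewrite /gmul (eq_bigr (fun s => \sum_rho \sum_pi
    if (pi * rho)%g == s then (if P s then f rho * g pi else 0) else 0)).
  rewrite exchange_big; apply: eq_bigr => rho _; rewrite exchange_big.
  apply: eq_bigr => pi _.
  by rewrite -big_mkcond (big_pred1 (pi * rho)%g) // => s; rewrite /= eq_sym.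
move=> s _; case: ifP => _; first by apply: eq_bigr => rho _; apply: eq_bigr => pi _; case: eqP.
by rewrite big1 // => rho _; rewrite big1 // => pi _; case: eqP.
Qed.

End GroupAlgebra.

Lemma sum_coef_monomials (C : comNzRingType) (p d m : nat) (a : 'I_p -> C) (f : nat -> C) :
  (d + p <= m)%N ->
  \sum_(j < m) (\sum_(i < p) (a i)%:P * 'X^(d + i))`_j * f j = \sum_(i < p) a i * f (d + i).
Proof.
move=> dp_le_m; under eq_bigr => j _ do rewrite coef_sum mulr_suml.
rewrite exchange_big /=; apply: eq_bigr => i _.
have di_lt_m : (d + i < m)%N by move: (ltn_ord i); lia.
rewrite (bigD1 (Ordinal di_lt_m)) //= coefCM coefXn eqxx mulr1 big1 ?addr0 // => j neq_j.
rewrite coefCM coefXn (_ : (j == d + i :> nat) = false) ?mulr0 ?mul0r //.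
by apply: contraNF neq_j => /eqP eq_j; apply/eqP/val_inj.
Qed.

Section Expansion.
Variables (M : eqType) (C : comNzRingType) (q : C) (E : M -> C)
  (c : forall p : nat, 'I_p -> 'S_p -> C) (K : seq M) (p : nat) (S : seq M)
  (y0 : M) (w : seq M).
Hypotheses (uK : uniq K) (uS : uniq S) (KS : {subset K <= S}).
Local Notation n := (size K).
Implicit Types (s : seq M) (t : {ffun 'I_p -> 'I_(size S)}).

Definition Eop_summand s : C := \sum_(pi : 'S_p) \sum_(i < p)
  c p i pi * E (nth y0 s (pi i)) * adags (permute p pi s) (annihs q s (basis K)) w.

Lemma Eop_summand_out s : ~~ uniq_within K s -> Eop_summand s = 0.
Proof.
move=> sNK; rewrite /Eop_summand annihs_basis // (negbTE sNK).
by rewrite big1 // => pi _; rewrite big1 // => i _; rewrite adags_basis mul0r mulr0.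
Qed.

Lemma Eop_summand_in s : uniq_within K s -> Eop_summand s =
  \sum_(pi : 'S_p) \sum_(i < p)
    if w == exclude s K ++ permute p pi s then
      q ^+ inversions K (exclude s K ++ s) * c p i pi * E (nth y0 s (pi i))
    else 0.
Proof.
move=> sK; rewrite /Eop_summand annihs_basis // sK.
apply: eq_bigr => pi _; apply: eq_bigr => i _; rewrite adags_basis /basis.
by case: eqP; rewrite ?mulr0 // mulr1 mulrC mulrA.
Qed.

Definition momenta t := [seq nth y0 S (t m) | m <- enum 'I_p].

Lemma size_momenta t : size (momenta t) = p.
Proof. by rewrite size_map size_enum_ord. Qed.

Lemma nth_momenta t (m : 'I_p) : nth y0 (momenta t) m = nth y0 S (t m).
Proof. by rewrite (nth_map m) ?size_enum_ord // nth_ord_enum. Qed.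

Lemma Eop_momenta : Eop q E c p S (basis K) w = \sum_t Eop_summand (momenta t).
Proof.
apply: eq_bigr => t _ /=; apply: eq_bigr => pi _; apply: eq_bigr => i _.
rewrite !(tnth_nth y0) /= -/(momenta t) nth_momenta (permuteE pi y0 (size_momenta t)).
congr (_ * _ * adags _ _ _); first by apply: eq_map => j; rewrite nth_momenta (tnth_nth y0).
by congr annihs; apply: eq_map => j; rewrite (tnth_nth y0).
Qed.

Lemma momenta_inj : injective momenta.
Proof.
move=> t t' eq_t; apply/ffunP => m; apply: val_inj.
have /eqP := congr1 (fun s => nth y0 s m) eq_t.
by rewrite /= !nth_momenta nth_uniq // => /eqP.
Qed.

Lemma momentaP s : uniq_within K s -> size s = p -> exists t, momenta t = s.
Proof.
move=> /andP[_ /allP sK] size_s.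
have sS (m : 'I_p) : nth y0 s m \in S by apply/KS/sK; rewrite mem_nth ?size_s.
have index_lt (m : 'I_p) : (index (nth y0 s m) S < size S)%N by rewrite index_mem.
exists [ffun m => Ordinal (index_lt m)].
apply: (@eq_from_nth _ y0) => [|j]; rewrite size_momenta ?size_s // => jlt.
by have := nth_momenta [ffun m => Ordinal (index_lt m)] (Ordinal jlt); rewrite ffunE nth_index.
Qed.

Definition permute_subJ (d : {set 'I_n} * 'S_p) := permute p d.2 (subJ K d.1).

Lemma permute_subJ_inj :
  {in [pred d : {set 'I_n} * 'S_p | #|d.1| == p] &, injective permute_subJ}.
Proof.
move=> [A rho] [A' rho'] /eqP /= cardA /eqP /= cardA'; rewrite /permute_subJ /= => eq_d.
have eqA : A = A'.
  apply/setP => i; rewrite -!(mem_subJ uK) (perm_mem (perm_eq_subJ_permute rho cardA)).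
  by rewrite (perm_mem (perm_eq_subJ_permute rho' cardA')) eq_d.
subst A'; congr pair.
have sizeJ : size (subJ K A) = p by rewrite size_subJ.
by apply: (permute_inj (uniq_subJ uK A) sizeJ).
Qed.

Lemma permute_subJP s : uniq_within K s -> size s = p ->
  exists2 d : {set 'I_n} * 'S_p, #|d.1| = p & permute_subJ d = s.
Proof.
move=> sK size_s; move: (sK) => /andP[us /allP s_K].
pose A := [set i : 'I_n | tnth (in_tuple K) i \in s].
have subJ_A : subJ K A = filter (mem s) K.
  rewrite (subJ_filter uK A); apply: eq_in_filter => x xK.
  by have [i ->] := seq_tnthP xK; rewrite /= (mem_subJ uK) inE.
have JS : perm_eq (subJ K A) s.
  rewrite subJ_A; apply: uniq_perm; rewrite ?filter_uniq // => x.
  by rewrite mem_filter /=; case: (boolP (x \in s)) => // /s_K.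
have cardA : #|A| = p by rewrite -(size_subJ K A) (perm_size JS).
have [rho rhoJ] := perm_eq_permuteP (uniq_subJ uK A) (etrans (size_subJ K A) cardA) JS.
by exists (A, rho).
Qed.

Lemma sum_momenta (F : seq M -> C) : (forall s, ~~ uniq_within K s -> F s = 0) ->
  \sum_t F (momenta t) =
  \sum_(A : {set 'I_n} | #|A| == p) \sum_(rho : 'S_p) F (permute p rho (subJ K A)).
Proof.
move=> F_out.
pose L := [seq momenta t | t : {ffun 'I_p -> 'I_(size S)} <- index_enum _
                            & uniq_within K (momenta t)].
pose R := [seq permute_subJ d | d : {set 'I_n} * 'S_p <- index_enum (prod {set 'I_n} 'S_p)
                              & #|d.1| == p].
have -> : \sum_t F (momenta t) = \sum_(s <- L) F s.
  rewrite big_map big_filter [RHS]big_mkcond; apply: eq_bigr => t _.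
  by case: ifP => // /negbT /F_out.
have -> : \sum_(A : {set 'I_n} | #|A| == p) \sum_(rho : 'S_p) F (permute p rho (subJ K A)) =
          \sum_(s <- R) F s.
  by rewrite pair_big_dep big_map big_filter; apply: eq_bigl => d; rewrite andbT.
apply: perm_big; apply: uniq_perm => [||s].
- by rewrite map_inj_uniq ?filter_uniq ?index_enum_uniq //; exact: momenta_inj.
- by rewrite map_inj_in_uniq ?filter_uniq ?index_enum_uniq // => d d'; rewrite !mem_filter;
    move=> /andP[dp _] /andP[d'p _]; apply: permute_subJ_inj.
transitivity (uniq_within K s && (size s == p)).
  apply/mapP/andP => [[t] | [sK /eqP size_s]].
    by rewrite mem_filter => /andP[tK _] ->; rewrite tK size_momenta.
  have [t eq_t] := momentaP _ sK size_s.
  by exists t; rewrite ?mem_filter eq_t ?sK ?mem_index_enum.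
apply/andP/mapP => [[sK /eqP size_s] | [d]].
  have [d cardA <-] := permute_subJP _ sK size_s.
  by exists d; rewrite // mem_filter cardA eqxx mem_index_enum.
rewrite mem_filter => /andP[/eqP cardA _] ->.
by rewrite uniq_within_permute_subJ // size_permute // size_subJ.
Qed.

Lemma rhs_poly_expand : rhs_poly q c K p w =
  \sum_(A : {set 'I_n} | #|A| == p) \sum_(rho : 'S_p) \sum_(pi : 'S_p)
    if w == compJ K A ++ permute p (pi * rho) (subJ K A) then
      \sum_(i < p) (q ^+ (Irel K (compJ K A ++ subJ K A) + ninv p rho) * c p i pi)%:P
                    * 'X^(n - p + i)
    else 0.
Proof.
rewrite /rhs_poly big_distrr; apply: eq_bigr => A _ /=.
rewrite catl_gact /Rp sum_gmul !big_distrr; apply: eq_bigr => rho _.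
rewrite !big_distrr; apply: eq_bigr => pi _ /=.
case: ifP => _; last by rewrite !mulr0.
rewrite !big_distrr; apply: eq_bigr => i _ /=.
by rewrite /alpha exprD !polyCM exprD -!mulrA !(mulrCA 'X^(n - p)).
Qed.

Lemma xi_rhs_poly : xi E (rhs_poly q c K p) w =
  \sum_(A : {set 'I_n} | #|A| == p) \sum_(rho : 'S_p) Eop_summand (permute p rho (subJ K A)).
Proof.
rewrite /xi rhs_poly_expand.
under eq_bigr => j _ do rewrite coef_sum mulr_suml.
rewrite exchange_big /=; apply: eq_bigr => A /eqP cardA.
under eq_bigr => j _ do rewrite coef_sum mulr_suml.
rewrite exchange_big /=; apply: eq_bigr => rho _.
have sizeJ : size (subJ K A) = p by rewrite size_subJ.
rewrite Eop_summand_in ?(uniq_within_permute_subJ uK) //.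
rewrite (exclude_permute_subJ uK) // (inversions_permute_subJ uK) //.
under eq_bigr => j _ do rewrite coef_sum mulr_suml.
rewrite exchange_big /=; apply: eq_bigr => pi _.
rewrite permuteM //; have [w_eq | _] := eqVneq w; last first.
  by rewrite [LHS]big1 ?big1 // => j _; rewrite coef0 mul0r.
have size_w : size w = (n - p + p)%N.
  by rewrite w_eq size_cat (size_compJ uK) size_permute // cardA.
under eq_bigr => j _ do rewrite (tnth_nth y0).
rewrite (@sum_coef_monomials _ p (n - p) _ _ (fun j => E (nth y0 w j))) ?size_w //.
apply: eq_bigr => i _; congr (_ * E _).
rewrite w_eq nth_cat (size_compJ uK) cardA ltnNge leq_addr /= addKn.
by rewrite (nth_permute _ _ i) // permM (nth_permute _ _ (pi i)).
Qed.

Lemma Eop_basis_expansion : Eop q E c p S (basis K) w = xi E (rhs_poly q c K p) w.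
Proof. by rewrite Eop_momenta (sum_momenta _ Eop_summand_out) xi_rhs_poly. Qed.

End Expansion.
Arguments Eop_basis_expansion {M C q E c K p S} y0 {w}.

Theorem Eop_basis (M : eqType) (C : comNzRingType) (q : C) (E : M -> C)
    (c : forall p : nat, 'I_p -> 'S_p -> C) (K : seq M) (p : nat) (S : seq M) :
  uniq K -> uniq S -> {subset K <= S} -> (1 <= p <= size K)%N ->
  forall w : seq M, Eop q E c p S (basis K) w = xi E (rhs_poly q c K p) w.
Proof.
(* The range of [p] only serves to make [K] nonempty, which provides a default
   letter [y0]. *)
case: K => [|y0 K] uK uS KS p_range w; first by case: p p_range.
exact: (Eop_basis_expansion y0 uK uS KS).
Qed.

Theorem proposition1 (R : realType) (M : eqType) (q : complex R) (E : M -> complex R)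
    (c : forall p : nat, 'I_p -> 'S_p -> complex R)
    (K : seq M) (p : nat) (S : seq M) :
  uniq K -> uniq S -> {subset K <= S} -> (1 <= p <= size K)%N ->
  forall w : seq M,
    Eop q E c p S (basis K) w = xi E (rhs_poly q c K p) w.
Proof. exact: Eop_basis. Qed.
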